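(* For weighted formulas, the proof system consisting of Axiom (A), Rules (R1)–(R5), and Rule (R6w) (in place of (R6)) is sound and complete: for every finite set $\Gamma$ of sentences and every sentence $\gamma$ (with weighted formulas as components), $\Gamma\vdash\gamma$ if and only if $\Gamma\models\gamma$.
   Context: Weighted setting. Fix a finite set of atomic propositions, finite sets of binary and unary connectives; each binary $\alpha$ has an arbitrary function $f_\alpha:[0,1]^2\times\mathbb R^2\to[0,1]$ and each unary $\rho$ an arbitrary $f_\rho:[0,1]\times\mathbb R\to[0,1]$. Weighted formulas: atoms are formulas; if $\sigma_1,\sigma_2,\sigma$ are formulas and $w_1,w_2,w\in\mathbb R$ are weights, then $(\sigma_1\,\alpha\,\sigma_2,w_1,w_2)$ and $(\rho\sigma,w)$ are formulas; their subformulas are $\sigma_1,\sigma_2$ resp. $\sigma$. A model assigns values in $[0,1]$ to atoms; the value of $(\sigma_1\,\alpha\,\sigma_2,w_1,w_2)$ is $f_\alpha(s_1,s_2,w_1,w_2)$ and of $(\rho\sigma,w)$ is $f_\rho(s,w)$, where $s_1,s_2,s$ are the values of $\sigma_1,\sigma_2,\sigma$. A sentence $(\sigma_1,\ldots,\sigma_k,S)$ has pairwise distinct formulas and $S\subseteq[0,1]^k$; $M$ satisfies it iff the tuple of values of the $\sigma_i$ lies in $S$. $\Gamma\models\gamma$: every model of all of $\Gamma$ is a model of $\gamma$; $\Gamma\vdash\gamma$: $\gamma$ derivable from $\Gamma$ by: (A) $(\sigma,[0,1])$ for every formula $\sigma$. (R1) For a permutation $\pi$: from $(\sigma_1,\ldots,\sigma_k,S)$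 infer $(\sigma_{\pi(1)},\ldots,\sigma_{\pi(k)},\{(s_{\pi(1)},\ldots,s_{\pi(k)}):(s_1,\ldots,s_k)\in S\})$. (R2) From $(\sigma_1,\ldots,\sigma_k,S)$ infer $(\sigma_1,\ldots,\sigma_m,S\times[0,1]^{m-k})$ (components kept distinct). (R3) From $(\sigma_1,\ldots,\sigma_k,S_1)$ and $(\sigma_1,\ldots,\sigma_k,S_2)$ infer $(\sigma_1,\ldots,\sigma_k,S_1\cap S_2)$. (R4) For $0<r<k$: from $(\sigma_1,\ldots,\sigma_k,S)$ infer $(\sigma_1,\ldots,\sigma_{k-r},\{(s_1,\ldots,s_{k-r}):(s_1,\ldots,s_k)\in S\})$. (R5) From $(\sigma_1,\ldots,\sigma_k,S)$ infer $(\sigma_1,\ldots,\sigma_k,S')$ whenever $S\subseteq S'\subseteq[0,1]^k$. (R6w) From $(\sigma_1,\ldots,\sigma_k,S)$ infer $(\sigma_1,\ldots,\sigma_k,S')$, where $S'$ is the set of $(s_1,\ldots,s_k)\in S$ such that $f_\alpha(s_i,s_j,w_1,w_2)=s_m$ whenever $\sigma_m$ is $(\sigma_i\,\alpha\,\sigma_j,w_1,w_2)$, and $f_\rho(s_i,w)=s_j$ whenever $\sigma_j$ is $(\rho\sigma_i,w)$. *)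

From Stdlib Require Import Reals List Permutation FinFun.
Import ListNotations.
Open Scope R_scope.

Section Weighted.

Variables (A B U : Type).
(* f_alpha : [0,1]^2 x R^2 -> [0,1], f_rho : [0,1] x R -> [0,1];
   modelled as total functions on R, the range condition on [0,1]
   inputs is a hypothesis of the theorem. *)
Variable fb : B -> R -> R -> R -> R -> R.
Variable fu : U -> R -> R -> R.

Inductive formula : Type :=
  | Atom : A -> formula
  | Bin : B -> formula -> formula -> R -> R -> formula
  | Un : U -> formula -> R -> formula.

Definition unit01 (x : R) : Prop := 0 <= x <= 1.

(* a sentence (sigma_1,...,sigma_k, S); tuples are lists of length k *)
Record sentence : Type := Sent { sforms : list formula; sset : list R -> Prop }.

Definition cube (k : nat) (v : list R) : Prop :=
  length v = k /\ Forall unit01 v.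

Definition wf_sentence (s : sentence) : Prop :=
  sforms s <> [] /\ NoDup (sforms s) /\
  (forall v, sset s v -> cube (length (sforms s)) v).

Definition model := A -> R.
Definition is_model (M : model) : Prop := forall a, unit01 (M a).

Fixpoint value (M : model) (f : formula) : R :=
  match f with
  | Atom a => M a
  | Bin b f1 f2 w1 w2 => fb b (value M f1) (value M f2) w1 w2
  | Un u f1 w => fu u (value M f1) w
  end.

Definition satisfies (M : model) (s : sentence) : Prop :=
  sset s (map (value M) (sforms s)).

Definition entails (Gamma : list sentence) (g : sentence) : Prop :=
  forall M : model, is_model M ->
    (forall s, In s Gamma -> satisfies M s) -> satisfies M g.

(* the R6w condition on a tuple v of values for the formula list l:
   f_alpha(s_i,s_j,w1,w2) = s_m whenever sigma_m is (sigma_i alpha sigma_j, w1, w2),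
   f_rho(s_i,w) = s_j whenever sigma_j is (rho sigma_i, w) *)
Definition r6w_ok (l : list formula) (v : list R) : Prop :=
  (forall (i j m : nat) b w1 w2 si sj xi xj xm,
     nth_error l i = Some si -> nth_error l j = Some sj ->
     nth_error l m = Some (Bin b si sj w1 w2) ->
     nth_error v i = Some xi -> nth_error v j = Some xj -> nth_error v m = Some xm ->
     fb b xi xj w1 w2 = xm) /\
  (forall (i j : nat) u w si xi xj,
     nth_error l i = Some si -> nth_error l j = Some (Un u si w) ->
     nth_error v i = Some xi -> nth_error v j = Some xj ->
     fu u xi w = xj).

(* reordering a list along an index list p (a permutation of 0..k-1):
   reorder p l l' means l' = (l_{p(0)}, ..., l_{p(k-1)}) *)
Definition reorder {T : Type} (p : list nat) (l l' : list T) : Prop :=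
  map (nth_error l) p = map Some l'.

Inductive derives (Gamma : list sentence) : sentence -> Prop :=
  | D_hyp : forall s, In s Gamma -> derives Gamma s
  | D_ax : forall sg, derives Gamma (Sent [sg] (cube 1))
  | D_perm : forall l S p l',
      derives Gamma (Sent l S) ->
      Permutation p (seq 0 (length l)) -> reorder p l l' ->
      derives Gamma (Sent l' (fun v' => exists v, S v /\ reorder p v v'))
  | D_ext : forall l S l2,
      derives Gamma (Sent l S) -> NoDup (l ++ l2) ->
      derives Gamma (Sent (l ++ l2)
        (fun u => exists v w, u = v ++ w /\ S v /\ cube (length l2) w))
  | D_inter : forall l S1 S2,
      derives Gamma (Sent l S1) -> derives Gamma (Sent l S2) ->
      derives Gamma (Sent l (fun v => S1 v /\ S2 v))
  (* (R4), with k = length (l ++ l2), r = length l2, 0 < r < k *)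
  | D_proj : forall l l2 S,
      derives Gamma (Sent (l ++ l2) S) -> l <> [] -> l2 <> [] ->
      derives Gamma (Sent l (fun v => exists u, S u /\ v = firstn (length l) u))
  | D_weak : forall l (S S' : list R -> Prop),
      derives Gamma (Sent l S) ->
      (forall v, S v -> S' v) -> (forall v, S' v -> cube (length l) v) ->
      derives Gamma (Sent l S')
  | D_r6w : forall l S,
      derives Gamma (Sent l S) ->
      derives Gamma (Sent l (fun v => S v /\ r6w_ok l v)).

End Weighted.

Arguments wf_sentence {A B U} s.
Arguments derives {A B U} fb fu Gamma _.
Arguments entails {A B U} fb fu Gamma g.
Arguments Sent {A B U} sforms sset.

(* Soundness is an induction on derivations: every rule maps sentences true
   in a model M to sentences true in M, because the value vector of M on any
   list of formulas lies in the cube and satisfies the (R6w) constraints.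

   Let L be the (duplicate-free) list of all subformulas of the
   formulas of Gamma and of gamma.  Every hypothesis can be transported to L
   by (R2) followed by a permutation (R1); intersecting them (R3) with the
   cube (A)+(R2), and applying (R6w), derives a sentence (L, X).  Since L is
   closed under subformulas, every tuple v in X is the value vector on L of
   some model M (values on atoms are read off v; (R6w) forces agreement on
   compound formulas).  M satisfies Gamma, hence gamma, so the restriction of
   v to the formulas of gamma lies in S_gamma.  Permuting L so that gamma's
   formulas come first and projecting (R4) then weakening (R5) yields gamma. *)

From Stdlib Require Import Reals List FinFun.
From Stdlib Require Import Permutation Lia Lra Classical ClassicalEpsilon.
Import ListNotations.
Open Scope R_scope.

#[local] Arguments Atom {A B U} _.
#[local] Arguments Bin {A B U} _ _ _ _ _.
#[local] Arguments Un {A B U} _ _ _.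
#[local] Arguments sforms {A B U} _.
#[local] Arguments sset {A B U} _ _.
#[local] Arguments value {A B U} fb fu M f.
#[local] Arguments is_model {A} M.
#[local] Arguments r6w_ok {A B U} fb fu l v.

(** * Coordinates of a tuple indexed by a list *)

Section Indexing.
Variable T : Type.

Fixpoint idx (x : T) (l : list T) : nat :=
  match l with
  | [] => 0%nat
  | y :: l' => if excluded_middle_informative (x = y) then 0%nat else S (idx x l')
  end.

Lemma idx_lt x l : In x l -> (idx x l < length l)%nat.
Proof.
  induction l as [|a l IH]; simpl; [tauto|].
  intros H; destruct (excluded_middle_informative (x = a)); [lia|].
  destruct H as [H|H]; [congruence|]. specialize (IH H); lia.
Qed.

Lemma idx_nth_error x l : In x l -> nth_error l (idx x l) = Some x.
Proof.
  induction l as [|a l IH]; simpl; [tauto|].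
  intros H; destruct (excluded_middle_informative (x = a)); [subst; reflexivity|].
  destruct H as [H|H]; [congruence|]. simpl; auto.
Qed.

Lemma idx_nth_error_inv x l n : NoDup l -> nth_error l n = Some x -> idx x l = n.
Proof.
  revert n; induction l as [|a l IH]; intros n Hnd H; [destruct n; discriminate|].
  inversion Hnd; subst. destruct n as [|n]; simpl in *.
  - inversion H; subst. destruct (excluded_middle_informative (x = x)); congruence.
  - destruct (excluded_middle_informative (x = a)).
    + subst. exfalso. eauto using nth_error_In.
    + f_equal; auto.
Qed.

Lemma idx_app x l1 l2 : In x l1 -> idx x (l1 ++ l2) = idx x l1.
Proof.
  induction l1 as [|a l IH]; simpl; [tauto|].
  intros H; destruct (excluded_middle_informative (x = a)); [reflexivity|].
  destruct H as [H|H]; [congruence|]. f_equal; auto.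
Qed.

Definition select (l L : list T) (v : list R) : list R :=
  map (fun f => nth (idx f l) v 0) L.

Lemma length_select l L v : length (select l L v) = length L.
Proof. apply length_map. Qed.

Lemma select_app_r l L1 L2 v : select l (L1 ++ L2) v = select l L1 v ++ select l L2 v.
Proof. apply map_app. Qed.

Lemma select_id l v : NoDup l -> length v = length l -> select l l v = v.
Proof.
  intros Hnd Hlen. apply nth_error_ext; intro n. unfold select.
  rewrite nth_error_map. destruct (nth_error l n) eqn:E; simpl.
  - rewrite (idx_nth_error_inv _ _ _ Hnd E). symmetry; apply nth_error_nth'.
    rewrite Hlen. apply nth_error_Some. congruence.
  - symmetry. apply nth_error_None. apply nth_error_None in E. lia.
Qed.

Lemma select_select L1 L2 L3 v : incl L3 L1 ->
  select L1 L3 (select L2 L1 v) = select L2 L3 v.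
Proof.
  intros H. apply map_ext_in. intros f Hf. unfold select.
  apply nth_error_nth. rewrite nth_error_map, idx_nth_error by auto. reflexivity.
Qed.

Lemma select_prefix l1 l2 v w : NoDup l1 -> length v = length l1 ->
  select (l1 ++ l2) l1 (v ++ w) = v.
Proof.
  intros Hnd Hlen. rewrite <- (select_id l1 v) at 2 by auto.
  apply map_ext_in. intros f Hf. rewrite idx_app, app_nth1 by (auto; rewrite Hlen; apply idx_lt; auto).
  reflexivity.
Qed.

Lemma select_cube l L v : Forall unit01 v -> cube (length L) (select l L v).
Proof.
  intros H. split; [apply length_select|]. apply Forall_forall; intros x Hx.
  apply in_map_iff in Hx as [f [<- _]].
  destruct (Nat.lt_ge_cases (idx f l) (length v)).
  - rewrite Forall_forall in H; apply H, nth_In; auto.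
  - rewrite nth_overflow by auto. unfold unit01; lra.
Qed.

Definition reindex (l L : list T) : list nat := map (fun f => idx f l) L.

Lemma reorder_select l L v v' : incl L l -> length v = length l ->
  reorder (reindex l L) v v' -> v' = select l L v.
Proof.
  unfold reorder, reindex; intros Hi Hl H. rewrite map_map in H.
  assert (Hinj : forall a b : list R, map Some a = map Some b -> a = b).
  { induction a; destruct b; simpl; intros E; inversion E; f_equal; auto. }
  apply Hinj. rewrite <- H. unfold select. rewrite map_map.
  apply map_ext_in. intros f Hf. apply nth_error_nth'. rewrite Hl. apply idx_lt; auto.
Qed.

Lemma reorder_reindex l L : incl L l -> reorder (reindex l L) l L.
Proof.
  unfold reorder, reindex; intros Hi. rewrite map_map. apply map_ext_in.
  intros f Hf. apply idx_nth_error; auto.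
Qed.

Lemma reindex_perm l L : NoDup l -> NoDup L -> (forall x, In x l <-> In x L) ->
  Permutation (reindex l L) (seq 0 (length l)).
Proof.
  intros Hl HL Hx. apply NoDup_Permutation.
  - apply Injective_map_NoDup_in; auto. intros x y Hxy Hyy E.
    assert (Ex := idx_nth_error x l (proj2 (Hx x) Hxy)).
    assert (Ey := idx_nth_error y l (proj2 (Hx y) Hyy)). congruence.
  - apply seq_NoDup.
  - intro n. unfold reindex. rewrite in_map_iff, in_seq. split.
    + intros [f [<- Hf]]. split; [lia|]. apply idx_lt, Hx; auto.
    + intros [_ Hn]. destruct (nth_error l n) as [f|] eqn:E.
      * exists f; split; [apply idx_nth_error_inv; auto|]. apply Hx; eauto using nth_error_In.
      * apply nth_error_None in E; lia.
Qed.

Definition complement (l L : list T) : list T :=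
  filter (fun x => if excluded_middle_informative (In x l) then false else true) L.

Lemma complement_spec l L : NoDup l -> NoDup L -> incl l L ->
  NoDup (l ++ complement l L) /\ (forall x, In x (l ++ complement l L) <-> In x L).
Proof.
  intros Hl HL Hi.
  assert (Hc : forall x, In x (complement l L) <-> In x L /\ ~ In x l).
  { intro x. unfold complement. rewrite filter_In.
    destruct (excluded_middle_informative (In x l)); intuition congruence. }
  split.
  - apply NoDup_app; [auto | apply NoDup_filter; auto |].
    intros x Hx Hx'. apply Hc in Hx'. tauto.
  - intros x. rewrite in_app_iff, Hc. split; [intros [H|[H _]]; auto|].
    intros H. destruct (classic (In x l)); auto.
Qed.

End Indexing.

Arguments idx {T} x l.
Arguments select {T} l L v.
Arguments reindex {T} l L.
Arguments complement {T} l L.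

(** * Derived rules *)

Section DerivedRules.
Variables (A B U : Type) (fb : B -> R -> R -> R -> R -> R) (fu : U -> R -> R -> R).
Variable Gamma : list (sentence A B U).
Notation form := (formula A B U).
Notation der := (derives fb fu Gamma).

Lemma der_rearrange (l L : list form) (S : list R -> Prop) :
  der (Sent l S) -> NoDup l -> NoDup L -> (forall x, In x l <-> In x L) ->
  (forall v, S v -> cube (length l) v) ->
  der (Sent L (fun v' => exists v, S v /\ v' = select l L v)).
Proof.
  intros D Hl HL Hx Hc.
  pose proof (D_perm _ _ _ fb fu Gamma _ _ _ L D (reindex_perm _ _ _ Hl HL Hx)
                (reorder_reindex _ _ _ (fun x H => proj2 (Hx x) H))) as D'.
  eapply D_weak; [exact D'| |].
  - intros v' [v [Hv Hr]]. exists v; split; auto.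
    apply reorder_select in Hr; [auto | intros x H; apply Hx; auto | apply Hc; auto].
  - intros v' [v [Hv ->]]. apply select_cube, Hc; auto.
Qed.

(* (R2) then (R1): a derivable sentence over [ls] yields one over any
   duplicate-free superset [L], constraining only the coordinates of [ls]. *)
Lemma der_extend (ls L : list form) (S : list R -> Prop) :
  der (Sent ls S) -> NoDup ls -> (forall v, S v -> cube (length ls) v) ->
  incl ls L -> NoDup L ->
  der (Sent L (fun v => cube (length L) v /\ S (select L ls v))).
Proof.
  intros D Hnd Hc Hi HL.
  destruct (complement_spec _ ls L Hnd HL Hi) as [Hnd2 Hx].
  set (l2 := complement ls L) in *.
  pose proof (D_ext _ _ _ fb fu Gamma _ _ l2 D Hnd2) as D2.
  assert (Hc2 : forall u, (exists v w, u = v ++ w /\ S v /\ cube (length l2) w) ->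
                          cube (length (ls ++ l2)) u).
  { intros u [v [w [-> [Hv [Hlw Hfw]]]]]. destruct (Hc v Hv) as [Hlv Hfv].
    split; [rewrite !length_app; lia | apply Forall_app; auto]. }
  eapply D_weak; [exact (der_rearrange _ L _ D2 Hnd2 HL Hx Hc2) | |].
  - intros v' [u [Hu ->]]. split; [apply select_cube, Hc2; auto|].
    destruct Hu as [v [w [-> [Hv _]]]].
    rewrite select_select, select_prefix by (auto; apply Hc; auto). exact Hv.
  - intros v [Hv _]; exact Hv.
Qed.

(* (A) then (R2): the full cube over any nonempty duplicate-free list. *)
Lemma der_cube (L : list form) : NoDup L -> L <> [] -> der (Sent L (cube (length L))).
Proof.
  intros HL Hne. destruct L as [|x rest]; [congruence|].
  pose proof (D_ext _ _ _ fb fu Gamma [x] _ rest (D_ax _ _ _ fb fu Gamma x) HL) as D.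
  eapply D_weak; [exact D| |auto].
  intros u [v [w [-> [[Hv1 Hv2] [Hw1 Hw2]]]]].
  split; [rewrite length_app, Hv1, Hw1; reflexivity | apply Forall_app; auto].
Qed.

(* (R3): derivable well-formed sentences whose formulas all lie in [L] can be
   conjoined into a single sentence over [L]. *)
Lemma der_conjoin (L : list form) (G : list (sentence A B U)) :
  NoDup L -> L <> [] ->
  (forall s, In s G -> wf_sentence s /\ der s /\ incl (sforms s) L) ->
  der (Sent L (fun v => cube (length L) v /\
                        forall s, In s G -> sset s (select L (sforms s) v))).
Proof.
  intros HL Hne. induction G as [|[ls S] G IH]; intros HG.
  - eapply D_weak; [apply der_cube; auto | | tauto].
    intros v Hv; split; [auto | intros s []].
  - destruct (HG _ (or_introl eq_refl)) as [[_ [Hnd Hc]] [D Hi]].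
    pose proof (der_extend ls L S D Hnd Hc Hi HL) as D1.
    pose proof (D_inter _ _ _ fb fu Gamma _ _ _ (IH (fun s H => HG s (or_intror H))) D1) as D2.
    eapply D_weak; [exact D2| |tauto].
    intros v [[Hv HGv] [_ HS]]. split; [auto|]. intros s [<-|Hs]; auto.
Qed.

(* (R1), (R4), (R5): from a sentence over [L], every consequence [Sg] of its
   restriction to a sublist [lg] is derivable. *)
Lemma der_restrict (lg L : list form) (X Sg : list R -> Prop) :
  der (Sent L X) -> NoDup lg -> NoDup L -> incl lg L -> lg <> [] ->
  (forall v, X v -> cube (length L) v) ->
  (forall v, X v -> Sg (select L lg v)) ->
  (forall v, Sg v -> cube (length lg) v) ->
  der (Sent lg Sg).
Proof.
  intros D Hndg HL Hi Hne HXc HXS Hc.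
  destruct (complement_spec _ lg L Hndg HL Hi) as [Hnd2 Hx].
  pose proof (der_rearrange _ (lg ++ complement lg L) _ D HL Hnd2
                (fun x => iff_sym (Hx x)) HXc) as D2.
  destruct (complement lg L) as [|h t] eqn:El2.
  - rewrite app_nil_r in D2. eapply D_weak; [exact D2| |exact Hc].
    intros v' [v [Hv ->]]. auto.
  - pose proof (D_proj _ _ _ fb fu Gamma _ _ _ D2 Hne ltac:(discriminate)) as D3.
    eapply D_weak; [exact D3| |exact Hc].
    intros w [u [[v [Hv ->]] ->]].
    rewrite select_app_r, firstn_app, <- (length_select _ L lg v), firstn_all,
      Nat.sub_diag, firstn_O, app_nil_r. auto.
Qed.

End DerivedRules.

(** * Soundness *)

Lemma reorder_map {T T' : Type} (g : T -> T') p (l l' : list T) :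
  reorder p l l' -> reorder p (map g l) (map g l').
Proof.
  unfold reorder; intros H.
  transitivity (map (option_map g) (map (nth_error l) p)).
  - rewrite map_map. apply map_ext. intros; apply nth_error_map.
  - rewrite H, !map_map. reflexivity.
Qed.

Section Soundness.
Variables (A B U : Type) (fb : B -> R -> R -> R -> R -> R) (fu : U -> R -> R -> R).
Hypothesis Hfb : forall b s1 s2 w1 w2, unit01 s1 -> unit01 s2 -> unit01 (fb b s1 s2 w1 w2).
Hypothesis Hfu : forall u s w, unit01 s -> unit01 (fu u s w).

Lemma values_cube (M : model A) (l : list (formula A B U)) :
  is_model M -> cube (length l) (map (value fb fu M) l).
Proof.
  intros HM. split; [apply length_map|]. apply Forall_forall; intros x Hx.
  apply in_map_iff in Hx as [f [<- _]].
  induction f; simpl; auto.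
Qed.

Lemma values_r6w (M : model A) (l : list (formula A B U)) :
  r6w_ok fb fu l (map (value fb fu M) l).
Proof.
  split.
  - intros i j m b w1 w2 si sj xi xj xm Hi Hj Hm Hxi Hxj Hxm.
    rewrite nth_error_map in Hxi, Hxj, Hxm. rewrite Hi in Hxi; rewrite Hj in Hxj; rewrite Hm in Hxm.
    simpl in *. congruence.
  - intros i j u w si xi xj Hi Hj Hxi Hxj.
    rewrite nth_error_map in Hxi, Hxj. rewrite Hi in Hxi; rewrite Hj in Hxj.
    simpl in *. congruence.
Qed.

Lemma soundness (Gamma : list (sentence A B U)) (g : sentence A B U) :
  derives fb fu Gamma g -> entails fb fu Gamma g.
Proof.
  intros D M HM HG. induction D; unfold satisfies in *; simpl in *.
  - auto.
  - apply (values_cube M [sg]); auto.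
  - exists (map (value fb fu M) l). split; [auto | apply reorder_map; auto].
  - exists (map (value fb fu M) l), (map (value fb fu M) l2).
    rewrite map_app. repeat split; auto; apply values_cube; auto.
  - auto.
  - exists (map (value fb fu M) (l ++ l2)). split; [auto|].
    rewrite map_app, firstn_app, <- (length_map (value fb fu M) l), firstn_all,
      Nat.sub_diag, firstn_O, app_nil_r.
    reflexivity.
  - auto.
  - split; [auto | apply values_r6w].
Qed.

End Soundness.

(** * Completeness *)

Section Completeness.
Variables (A B U : Type) (fb : B -> R -> R -> R -> R -> R) (fu : U -> R -> R -> R).
Notation form := (formula A B U).

Fixpoint subformulas (f : form) : list form :=
  f :: match f with
       | Atom _ => []
       | Bin _ f1 f2 _ _ => subformulas f1 ++ subformulas f2
       | Un _ f1 _ => subformulas f1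
       end.

Lemma subformulas_trans f f' : In f' (subformulas f) -> incl (subformulas f') (subformulas f).
Proof.
  induction f; simpl; intros [H|H]; subst; try apply incl_refl; try tauto.
  - apply in_app_iff in H as [H|H]; [apply IHf1 in H|apply IHf2 in H];
      intros x Hx; right; apply in_app_iff; auto.
  - apply IHf in H. intros x Hx; right; auto.
Qed.

Definition subformula_closed (L : list form) : Prop :=
  (forall b f1 f2 w1 w2, In (Bin b f1 f2 w1 w2) L -> In f1 L /\ In f2 L) /\
  (forall u f1 w, In (Un u f1 w) L -> In f1 L).

Definition closure (ls : list form) : list form :=
  nodup (fun x y => excluded_middle_informative (x = y)) (flat_map subformulas ls).

Lemma closure_incl ls : incl ls (closure ls).
Proof.
  intros f Hf. apply nodup_In, in_flat_map. exists f. split; [auto | destruct f; left; auto].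
Qed.

Lemma closure_closed ls : subformula_closed (closure ls).
Proof.
  assert (K : forall f f', In f (closure ls) -> In f' (subformulas f) -> In f' (closure ls)).
  { intros f f' Hf Hf'. apply nodup_In in Hf. apply nodup_In, in_flat_map.
    apply in_flat_map in Hf as [x [Hx Hfx]]. exists x; split; auto.
    apply (subformulas_trans _ _ Hfx); auto. }
  assert (Hself : forall f, In f (subformulas f)) by (destruct f; left; auto).
  split.
  - intros b f1 f2 w1 w2 H.
    split; apply (K _ _ H); simpl; right; apply in_app_iff; [left|right]; apply Hself.
  - intros u f1 w H. apply (K _ _ H); simpl; right; apply Hself.
Qed.

(* On a subformula-closed list, every tuple of the cube obeying the (R6w)
   constraints is the value vector of a model: the model reads atoms off the
   tuple, and (R6w) propagates the agreement to compound formulas. *)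
Lemma tuple_model (L : list form) (v : list R) :
  subformula_closed L -> NoDup L -> cube (length L) v -> r6w_ok fb fu L v ->
  exists M : model A, is_model M /\
    forall ls, incl ls L -> map (value fb fu M) ls = select L ls v.
Proof.
  intros [Cb Cu] HL Hc [Rb Ru].
  set (M := fun a => if excluded_middle_informative (In (Atom a) L)
                     then nth (idx (Atom a) L) v 0 else 0).
  assert (Hnv : forall f, In f L -> nth_error v (idx f L) = Some (nth (idx f L) v 0)).
  { intros f Hf. apply nth_error_nth'. rewrite (proj1 Hc). apply idx_lt; auto. }
  assert (HM : forall f, In f L -> value fb fu M f = nth (idx f L) v 0).
  { induction f as [a|b f1 IH1 f2 IH2 w1 w2|u f1 IH w]; intros Hf; simpl.
    - unfold M. destruct (excluded_middle_informative _); tauto.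
    - destruct (Cb _ _ _ _ _ Hf) as [H1 H2]. rewrite IH1, IH2 by auto.
      eapply Rb; try apply idx_nth_error; try apply Hnv; auto.
    - rewrite IH by (eapply Cu; eauto).
      eapply Ru; try apply idx_nth_error; try apply Hnv; eauto. }
  exists M. split.
  - intros a. unfold M. destruct (excluded_middle_informative _).
    + pose proof (select_cube _ L [Atom a] v (proj2 Hc)) as [_ H].
      inversion H; auto.
    + unfold unit01; lra.
  - intros ls Hls. apply map_ext_in. intros f Hf. apply HM; auto.
Qed.

Lemma completeness (Gamma : list (sentence A B U)) (g : sentence A B U) :
  (forall s, In s Gamma -> wf_sentence s) -> wf_sentence g ->
  entails fb fu Gamma g -> derives fb fu Gamma g.
Proof.
  intros Hwf [Hne [Hndg Hcg]] E. destruct g as [lg Sg]; simpl in *.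
  set (L := closure (concat (map sforms (Sent lg Sg :: Gamma)))).
  assert (Hin : forall s, In s (Sent lg Sg :: Gamma) -> incl (sforms s) L).
  { intros s Hs f Hf. apply closure_incl, in_concat. exists (sforms s); split; auto.
    apply in_map; auto. }
  assert (HL : NoDup L) by apply NoDup_nodup.
  assert (Hig : incl lg L) by (apply (Hin (Sent lg Sg)); left; auto).
  assert (HLne : L <> []).
  { destruct lg as [|f0]; [congruence|]. intros H. specialize (Hig f0). rewrite H in Hig.
    apply Hig; left; auto. }
  pose proof (der_conjoin _ _ _ fb fu Gamma L Gamma HL HLne
                (fun s Hs => conj (Hwf s Hs) (conj (D_hyp _ _ _ _ _ _ s Hs)
                                                   (Hin s (or_intror Hs))))) as D.
  apply (der_restrict _ _ _ fb fu Gamma _ _ _ Sg (D_r6w _ _ _ _ _ _ _ _ D)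
           Hndg HL Hig Hne); [tauto | | exact Hcg].
  intros v [[Hc HG] Hr6].
  destruct (tuple_model L v (closure_closed _) HL Hc Hr6) as [M [HM HMv]].
  rewrite <- HMv by auto. apply (E M HM).
  intros s Hs. unfold satisfies. rewrite HMv by (apply Hin; right; auto). apply HG; auto.
Qed.

End Completeness.

Theorem theorem5
  (A B U : Type) (HA : Finite A) (HB : Finite B) (HU : Finite U)
  (fb : B -> R -> R -> R -> R -> R) (fu : U -> R -> R -> R)
  (Hfb : forall b s1 s2 w1 w2, unit01 s1 -> unit01 s2 -> unit01 (fb b s1 s2 w1 w2))
  (Hfu : forall u s w, unit01 s -> unit01 (fu u s w))
  (Gamma : list (sentence A B U)) (g : sentence A B U) :
  (forall s, In s Gamma -> wf_sentence s) -> wf_sentence g ->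
  (derives fb fu Gamma g <-> entails fb fu Gamma g).
Proof.
  intros Hwf Hwg. split.
  - apply soundness; auto.
  - apply completeness; auto.
Qed.
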